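(* Let $N\ge 4$ and let $\mathbf M$ be an $(N+1,2)$-admissible matrix whose core matrix $\widetilde{\mathbf M}$ is tridiagonal (for a suitable ordering of the transient states). Then $\mathbf M$ is micro-reversible, i.e. if $(\mu,\widetilde{\mathbf w},\widetilde{\mathbf z})$ is its characteristic triple then $\widetilde w_i\widetilde M_{ij}\widetilde z_j=\widetilde w_j\widetilde M_{ji}\widetilde z_i$ for all transient indices $i,j$.
   Context: Matrices are column-stochastic (nonnegative entries, columns summing to $1$). For $1\le k<N-1$, an $(N+1)\times(N+1)$ column-stochastic matrix $\mathbf M$ is $(N+1,k)$-admissible if, after a simultaneous permutation of rows and columns, $\mathbf M=\begin{pmatrix}\widetilde{\mathbf M}&\mathbf 0\\ \mathbf A&\mathbf I\end{pmatrix}$ with $\mathbf I$ the $k\times k$ identity, $\widetilde{\mathbf M}$ an irreducible $(N+1-k)\times(N+1-k)$ matrix (the core matrix, indexed by the transient states), and $\mathbf A$ a $k\times(N+1-k)$ matrix with no identically zero row. The core is strictly substochastic; let $\mu=\rho(\widetilde{\mathbf M})\in(0,1)$ be its spectral radius and let $\widetilde{\mathbf w},\widetilde{\mathbf z}$ be the unique positive left and right eigenvectors of $\widetilde{\mathbf M}$ for $\mu$, normalised by $\langle\widetilde{\mathbf w},\mathbf 1\rangle=\langle\widetilde{\mathbf w},\widetilde{\mathbf z}\rangle=1$; $(\mu,\widetilde{\mathbf w},\widetilde{\mathbf z})$ is the characteristic triple. $\mathbf M$ is called micro-reversible if $\widetilde w_i\widetilde M_{ij}\widetilde z_j=\widetilde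 w_j\widetilde M_{ji}\widetilde z_i$ for all transient $i,j$. *)

From HB Require Import structures.
From mathcomp Require Import all_boot all_order all_algebra all_fingroup.
From mathcomp Require Import reals.
From mathcomp.real_closed Require Import complex.
Set Implicit Arguments. Unset Strict Implicit. Unset Printing Implicit Defensive.
Import Order.TTheory GRing.Theory Num.Theory.
Local Open Scope ring_scope.

(* Matrices act on column vectors; M i j is the entry in row i, column j.
   Column-stochastic: nonnegative entries, each column sums to 1. *)
Definition column_stochastic (R : realType) (n : nat) (M : 'M[R]_n) : Prop :=
  (forall i j, 0 <= M i j) /\ (forall j, \sum_i M i j = 1).

Definition core_mx (R : realType) (n : nat) (M : 'M[R]_n) (T : {set 'I_n})
  : 'M[R]_#|T| :=
  \matrix_(a, b) M (enum_val a) (enum_val b).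

Definition irreducible_mx (R : realType) (m : nat) (A : 'M[R]_m) : Prop :=
  forall a b : 'I_m, connect (fun x y => A x y != 0) a b.

(* M is (n,k)-admissible with transient set T: after a simultaneous
   permutation putting T first, M = [[Mt, 0], [A, I_k]] with Mt irreducible
   and A without zero row. Column j absorbing means M i j = delta_ij. *)
Definition admissible_wrt (R : realType) (n k : nat) (M : 'M[R]_n)
  (T : {set 'I_n}) : Prop :=
  [/\ column_stochastic M /\ ((1 <= k)%N /\ (k < n.-1.-1)%N),
      (* 1 <= k < N-1 where n = N+1 *)
      #|T| = (n - k)%N,
      (forall j, j \notin T -> forall i, M i j = (i == j)%:R),
      (forall i, i \notin T -> (exists2 j, j \in T & M i j != 0))
    & irreducible_mx (core_mx M T)].

Definition tridiagonalizable (R : realType) (m : nat) (A : 'M[R]_m) : Prop :=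
  exists p : 'S_m, forall a b : 'I_m,
    ((p a).+1 < p b)%N \/ ((p b).+1 < p a)%N -> A a b = 0.

Definition complex_eigenvalue (R : realType) (m : nat) (A : 'M[R]_m)
  (l : R[i]) : Prop :=
  exists2 v : 'cV[R[i]]_m, v != 0 &
    map_mx (fun x : R => x%:C%C) A *m v = l *: v.

Definition is_spectral_radius (R : realType) (m : nat) (A : 'M[R]_m)
  (mu : R) : Prop :=
  (exists2 l : R[i], complex_eigenvalue A l & `|l| = (mu%:C)%C) /\
  (forall l, complex_eigenvalue A l -> `|l| <= (mu%:C)%C).

Definition characteristic_triple (R : realType) (m : nat) (A : 'M[R]_m)
  (mu : R) (w z : 'cV[R]_m) : Prop :=
  [/\ is_spectral_radius A mu /\
        ((forall a, 0 < w a 0) /\ (forall a, 0 < z a 0)),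
      A^T *m w = mu *: w,
      A *m z = mu *: z,
      \sum_a w a 0 = 1
    & \sum_a w a 0 * z a 0 = 1].

Definition micro_reversible_core (R : realType) (m : nat) (A : 'M[R]_m)
  (w z : 'cV[R]_m) : Prop :=
  forall a b, w a 0 * A a b * z b 0 = w b 0 * A b a * z a 0.

(* The matrix X with entries w_a M_ab z_b has equal row and column sums,
   both being mu w_a z_a by the two eigenvector equations. A matrix supported
   on the edges of a path whose row and column sums agree is symmetric: walking
   along the path, the net flow X_ab - X_ba out of a vertex vanishes on the edge
   back to its predecessor, so by the balance condition it also vanishes on the
   only remaining edge, the one to its successor. *)

From HB Require Import structures.
From mathcomp Require Import all_boot all_order all_algebra all_fingroup.
From mathcomp Require Import reals.
From mathcomp.real_closed Require Import complex.
From mathcomp Require Import zify.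
Import Order.TTheory GRing.Theory Num.Theory.
Local Open Scope ring_scope.

Lemma path_balanced_sym (I : finType) (V : zmodType) (p : I -> nat)
    (X : I -> I -> V) :
  injective p ->
  (forall a b, ((p a).+1 < p b)%N \/ ((p b).+1 < p a)%N -> X a b = 0) ->
  (forall a, \sum_b X a b = \sum_b X b a) ->
  forall a b, X a b = X b a.
Proof.
move=> p_inj X_band X_balanced.
suff flux0 n a b : p a = n -> X a b - X b a = 0.
  by move=> a b; apply/eqP; rewrite -subr_eq0 (flux0 _ a b erefl).
elim/ltn_ind: n a b => n IH a b pa.
have off c : p c != (p a).+1 -> X a c - X c a = 0.
  move=> pc; case: (ltngtP (p c) (p a)) => [lt | gt | pca].
  - by apply/eqP; rewrite -oppr_eq0 opprB (IH (p c)) // -pa.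
  - by rewrite !X_band ?subrr //; [right | left]; lia.
  - by rewrite (p_inj _ _ pca) subrr.
have [pb | ] := eqVneq (p b) (p a).+1; last exact: off.
have : \sum_c (X a c - X c a) = 0 by rewrite sumrB X_balanced subrr.
rewrite (bigD1 b) //= big1 ?addr0 // => c cb.
by apply: off; rewrite -pb; apply: contra_neq cb; apply: p_inj.
Qed.

Lemma eigen_weighted_balanced (R : comPzRingType) (m : nat) (A : 'M[R]_m)
    (mu : R) (w z : 'cV[R]_m) :
  A^T *m w = mu *: w -> A *m z = mu *: z ->
  forall a, \sum_b w a 0 * A a b * z b 0 = \sum_b w b 0 * A b a * z a 0.
Proof.
move=> Hw Hz a.
have row : \sum_b w a 0 * A a b * z b 0 = w a 0 * (A *m z) a 0.
  by rewrite mxE mulr_sumr; apply: eq_bigr => b _; rewrite mulrA.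
have col : \sum_b w b 0 * A b a * z a 0 = (A^T *m w) a 0 * z a 0.
  by rewrite mxE mulr_suml; apply: eq_bigr => b _; rewrite mxE (mulrC (w b 0)).
by rewrite row col Hz Hw !mxE mulrCA mulrA.
Qed.

Theorem lemma2 (R : realType) (N : nat) (M : 'M[R]_N.+1) (T : {set 'I_N.+1}) :
  (4 <= N)%N ->
  admissible_wrt 2 M T ->
  tridiagonalizable (core_mx M T) ->
  forall (mu : R) (w z : 'cV[R]_#|T|),
    characteristic_triple (core_mx M T) mu w z ->
    micro_reversible_core (core_mx M T) w z.
Proof.
move=> _ _ [p tri] mu w z [_ Hw Hz _ _].
apply: (@path_balanced_sym _ _ (fun a => val (p a))
          (fun a b => w a 0 * core_mx M T a b * z b 0)).
- by move=> a b /val_inj /perm_inj.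
- by move=> a b /tri ->; rewrite mulr0 mul0r.
- exact: eigen_weighted_balanced Hw Hz.
Qed.
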